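(* Let $\Lambda\in(\mathbb{R}\setminus\{0\})^n$, let $\mathcal{X}$ be as in the context and $P\in\mathrm{Lip}_{\mathcal{X}}(\mathbb{C}^n,\mathbb{C}^n)$. Then for every $a\in\mathbb{C}^n$ the limit $\langle\langle P\rangle\rangle(a)=\lim_{T\to\pm\infty}\langle\langle P\rangle\rangle^T(a)$ exists, and $\langle\langle P\rangle\rangle\in\mathrm{Lip}_{\mathcal{X}}(\mathbb{C}^n,\mathbb{C}^n)$. Moreover, for every $R>0$ the convergence is uniform in $a\in\bar B_R$, i.e. the rate of convergence depends only on $R$, $\Lambda$ and $P$.
   Context: $\mathbb{C}^n\cong\mathbb{R}^{2n}$ with Euclidean norm; $B_R=\{v:|v|<R\}$, $\bar B_R$ its closure. For a non-decreasing continuous function $\mathcal{X}:\mathbb{R}_+\to\mathbb{R}_+$, $\mathrm{Lip}_{\mathcal{X}}(\mathbb{C}^n,\mathbb{C}^n)$ is the set of continuous vector fields $f:\mathbb{C}^n\to\mathbb{C}^n$ with $\sup_{B_R}|f|\le\mathcal{X}(R)$ and $\mathrm{Lip}(f|_{B_R})\le\mathcal{X}(R)$ for all $R\ge0$. For $w\in\mathbb{R}^n$, $\Phi_w=\mathrm{diag}(e^{\mathbf{i}w_1},\dots,e^{\mathbf{i}w_n})$. For $T\ne0$, $\langle\langle P\rangle\rangle^T(a)=\frac{1}{|T|}\int_0^T\Phi_{\Lambda t}P(\Phi_{-\Lambda t}a)\,dt$ (for $T<0$, $\int_0^T$ means $\int_T^0$). *)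

From Stdlib Require Import Reals ClassicalEpsilon.
From mathcomp Require Import all_boot.
Set Implicit Arguments. Unset Strict Implicit. Unset Printing Implicit Defensive.
Local Open Scope R_scope.

(* A complex number z = x + i y is the pair (x, y). *)
Definition C : Type := (R * R)%type.
Definition Cn (n : nat) : Type := 'I_n -> C.

Definition vsub (n : nat) (u v : Cn n) : Cn n :=
  fun j => (fst (u j) - fst (v j), snd (u j) - snd (v j)).

Definition vnorm (n : nat) (v : Cn n) : R :=
  sqrt (\big[Rplus/0]_(j < n) ((fst (v j))^2 + (snd (v j))^2)).

(* multiplication by e^{i th} *)
Definition crot (th : R) (z : C) : C :=
  (cos th * fst z - sin th * snd z, sin th * fst z + cos th * snd z).

Definition Phi (n : nat) (w : 'I_n -> R) (a : Cn n) : Cn n :=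
  fun j => crot (w j) (a j).

(* Riemann integral \int_a^b f (value independent of the integrability proof;
   0 if f is not Riemann integrable, which never happens for continuous f). *)
Definition Rint (f : R -> R) (a b : R) : R :=
  epsilon (inhabits 0)
    (fun I => exists pr : Riemann_integrable f a b, RiemannInt pr = I).

(* (1/|T|) \int_0^T f, with \int_0^T meaning \int_T^0 for T < 0. *)
Definition avgR (f : R -> R) (T : R) : R :=
  if Rlt_dec 0 T then / T * Rint f 0 T else / (- T) * Rint f T 0.

Definition avgP (n : nat) (Lam : 'I_n -> R) (P : Cn n -> Cn n) (T : R) (a : Cn n)
  : Cn n :=
  fun j =>
    let g := fun t => crot (Lam j * t) (P (Phi (fun k => - (Lam k * t)) a) j) in
    (avgR (fun t => fst (g t)) T, avgR (fun t => snd (g t)) T).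

(* X : R_+ -> R_+ non-decreasing and continuous (only values on [0,oo) matter). *)
Definition Xadm (X : R -> R) : Prop :=
  (forall r, 0 <= r -> 0 <= X r) /\
  (forall r s, 0 <= r -> r <= s -> X r <= X s) /\
  (forall r, 0 <= r -> forall eps, 0 < eps -> exists delta, 0 < delta /\
     forall s, 0 <= s -> Rabs (s - r) < delta -> Rabs (X s - X r) < eps).

Definition LipX (n : nat) (X : R -> R) (f : Cn n -> Cn n) : Prop :=
  (forall x eps, 0 < eps -> exists delta, 0 < delta /\
     forall y, vnorm (vsub y x) < delta -> vnorm (vsub (f y) (f x)) < eps) /\
  (forall r, 0 <= r ->
     (forall v, vnorm v < r -> vnorm (f v) <= X r) /\
     (forall u v, vnorm u < r -> vnorm v < r ->
        vnorm (vsub (f u) (f v)) <= X r * vnorm (vsub u v))).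

From HB Require Import structures.
From Stdlib Require Import Reals Lra ClassicalEpsilon FunctionalExtensionality.
From mathcomp Require Import all_boot.
From Coquelicot Require Import Rcomplements Hierarchy RInt Continuity.
Set Implicit Arguments. Unset Strict Implicit.
Local Open Scope R_scope.

(* The integrand t |-> Phi_{Lam t} P (Phi_{-Lam t} a) is bounded, continuous and, uniformly
   for a in a ball, almost periodic: by a pigeonhole argument on the torus, every window of
   some length L(eta) contains a time tau at which all the rotations e^{i Lam_j tau} are
   eta-close to 1, and shifting by such a tau moves the integrand by O(eta).  Cutting [0, T]
   into windows of length L shows that the averages of such a function converge, with an
   error O(L / |T| + eta); this is the uniform convergence.  Since rotations are isometries,
   every average <<P>>^T obeys the same sup and Lipschitz bounds on balls as P, and these
   bounds pass to the limit. *)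

HB.instance Definition _ :=
  Monoid.isComLaw.Build R 0 Rplus (fun x y z => esym (Rplus_assoc x y z)) Rplus_comm Rplus_0_l.

Lemma big_Rmult_distrl (I : Type) (r : seq I) (F : I -> R) c :
  c * \big[Rplus/0]_(i <- r) F i = \big[Rplus/0]_(i <- r) (c * F i).
Proof. exact: (big_morph (fun x => c * x) (Rmult_plus_distr_l c) (Rmult_0_r c)). Qed.

Lemma big_Rle (I : Type) (r : seq I) (F G : I -> R) :
  (forall i, F i <= G i) -> \big[Rplus/0]_(i <- r) F i <= \big[Rplus/0]_(i <- r) G i.
Proof. by move=> FG; apply: big_ind2 => [|*|*]; [lra | apply: Rplus_le_compat | apply: FG]. Qed.

Lemma big_Rle0 (I : Type) (r : seq I) (P : pred I) (F : I -> R) :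
  (forall i, P i -> 0 <= F i) -> 0 <= \big[Rplus/0]_(i <- r | P i) F i.
Proof. by move=> F0; apply: big_ind => [|*|*]; [lra | apply: Rplus_le_le_0_compat | apply: F0]. Qed.

Lemma big_Rle_term (I : finType) (F : I -> R) j :
  (forall i, 0 <= F i) -> F j <= \big[Rplus/0]_i F i.
Proof.
move=> F0; rewrite (bigD1 j) //=.
have : 0 <= \big[Rplus/0]_(i | i != j) F i by apply: big_Rle0 => i _.
lra.
Qed.

Lemma big_Rconst n c : \big[Rplus/0]_(j < n) c = INR n * c.
Proof.
rewrite big_const_ord; elim: n => [|n IH] /=; first lra.
by rewrite IH; case: n {IH} => [|n] /=; lra.
Qed.

(** * The Euclidean norm on C^n *)

Section Euclidean.
Variable n : nat.
Implicit Types u v w : Cn n.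

Definition dot u v : R :=
  \big[Rplus/0]_(j < n) (fst (u j) * fst (v j) + snd (u j) * snd (v j)).

Lemma vnorm_ge0 v : 0 <= vnorm v.
Proof. exact: sqrt_pos. Qed.

Lemma dot_ge0 v : 0 <= dot v v.
Proof. by apply: big_Rle0 => j; nra. Qed.

Lemma vnorm_dot v : vnorm v = sqrt (dot v v).
Proof. by rewrite /vnorm /dot; congr sqrt; apply: eq_bigr => j _ /=; ring. Qed.

Lemma vnorm_sqr v : vnorm v * vnorm v = dot v v.
Proof. by rewrite vnorm_dot sqrt_sqrt //; apply: dot_ge0. Qed.

Lemma vnorm_le_sqr v K : 0 <= K -> dot v v <= K * K -> vnorm v <= K.
Proof. move=> K0 vK; have := vnorm_ge0 v; have := vnorm_sqr v; nra. Qed.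

Lemma vnorm_coord v j : Rabs (fst (v j)) <= vnorm v /\ Rabs (snd (v j)) <= vnorm v.
Proof.
have vj : fst (v j) * fst (v j) + snd (v j) * snd (v j) <= dot v v.
  have := @big_Rle_term _ (fun i => fst (v i) * fst (v i) + snd (v i) * snd (v i)) j.
  by rewrite /dot; apply=> i; nra.
have := vnorm_sqr v; have := vnorm_ge0 v.
have := Rsqr_abs (fst (v j)); have := Rsqr_abs (snd (v j)); rewrite /Rsqr.
have := Rabs_pos (fst (v j)); have := Rabs_pos (snd (v j)); split; nra.
Qed.

Lemma dot_sym u v : dot u v = dot v u.
Proof. by apply: eq_bigr => j _; ring. Qed.

Lemma dot_self_eq0 v u : dot v v = 0 -> dot v u = 0.
Proof.
move=> v0; rewrite /dot big1 // => j _.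
have [] := vnorm_coord v j; rewrite vnorm_dot v0 sqrt_0 => /Rabs_le_between [? ?] /Rabs_le_between [? ?].
have -> : fst (v j) = 0 by lra.
have -> : snd (v j) = 0 by lra.
ring.
Qed.

Lemma Cauchy_Schwarz u v : dot u v <= vnorm u * vnorm v.
Proof.
set A := dot u u; set B := dot u v; set C := dot v v.
have quad l : 0 <= A + 2 * l * B + l * l * C.
  rewrite /A /B /C /dot !big_Rmult_distrl -!big_split /=.
  apply: big_Rle0 => j _.
  have := Rle_0_sqr (fst (u j) + l * fst (v j)); have := Rle_0_sqr (snd (u j) + l * snd (v j)).
  rewrite /Rsqr; lra.
have BC : B * B <= A * C.
  have [C0|C0] := Req_dec C 0.
    by rewrite /B dot_sym (dot_self_eq0 u C0) C0; nra.
  have := quad (- B / C); have C0' : 0 < C by have := dot_ge0 v; rewrite -/C; lra.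
  have -> : A + 2 * (- B / C) * B + - B / C * (- B / C) * C = (A * C - B * B) / C by field.
  by move=> /(Rmult_le_compat_r C _ _ (Rlt_le _ _ C0')); rewrite Rmult_0_l /Rdiv Rmult_assoc Rinv_l; lra.
have N2 : (vnorm u * vnorm v) * (vnorm u * vnorm v) = A * C.
  by rewrite /A /C -!vnorm_sqr; ring.
have := Rmult_le_pos _ _ (vnorm_ge0 u) (vnorm_ge0 v); nra.
Qed.

Lemma vnorm_vsub_le u v w : vnorm (vsub u w) <= vnorm (vsub u v) + vnorm (vsub v w).
Proof.
set x := vsub u v; set y := vsub v w.
have E : dot (vsub u w) (vsub u w) = dot x x + 2 * dot x y + dot y y.
  by rewrite /dot big_Rmult_distrl -!big_split; apply: eq_bigr => j _ /=; ring.
apply: vnorm_le_sqr; first by have := vnorm_ge0 x; have := vnorm_ge0 y; lra.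
rewrite E -!vnorm_sqr; have := Cauchy_Schwarz x y; nra.
Qed.

Lemma vnorm_vsubC u v : vnorm (vsub u v) = vnorm (vsub v u).
Proof. by rewrite !vnorm_dot; congr sqrt; apply: eq_bigr => j _ /=; ring. Qed.

Definition vzero : Cn n := fun _ => (0, 0).

Lemma vsubv0 v : vsub v vzero = v.
Proof. by apply: functional_extensionality => j; rewrite /vsub /= !Rminus_0_r; case: (v j). Qed.

Lemma vnorm_le_coords v c : 0 <= c ->
  (forall j, Rabs (fst (v j)) <= c /\ Rabs (snd (v j)) <= c) -> vnorm v <= (2 * INR n + 1) * c.
Proof.
move=> c0 vc; apply: vnorm_le_sqr; first by have := pos_INR n; nra.
apply: Rle_trans (_ : \big[Rplus/0]_(j < n) (2 * (c * c)) <= _).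
  apply: big_Rle => j; have [/Rabs_le_between ? /Rabs_le_between ?] := vc j; nra.
rewrite big_Rconst; have := pos_INR n; nra.
Qed.

End Euclidean.

(** * Rotations and simultaneous recurrence *)

Lemma Rabs_sin_le x : Rabs (sin x) <= Rabs x.
Proof.
have pos y : 0 < y -> Rabs (sin y) <= y.
  move=> y0; have sin_y := sin_lt_x y y0; have [sin_lo _] := SIN_bound y; have PI_gt := PI2_1.
  apply: Rabs_le; split; last lra.
  have [yPI|] := Rle_lt_dec y PI; last lra.
  by have := sin_ge_0 y (Rlt_le _ _ y0) yPI; lra.
have [x0|[->|x0]] := Rtotal_order x 0.
- by have := pos (- x) ltac:(lra); rewrite sin_neg Rabs_Ropp (Rabs_left _ x0).
- by rewrite sin_0 Rabs_R0; lra.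
- by rewrite (Rabs_right x); [apply: pos|]; lra.
Qed.

Lemma two_sub_cos_le x : 2 - 2 * cos x <= x * x.
Proof.
have -> : x = 2 * (x / 2) by field.
rewrite cos_2a_sin; have := Rabs_sin_le (x / 2).
have := Rsqr_abs (sin (x / 2)); have := Rsqr_abs (x / 2); rewrite /Rsqr.
have := Rabs_pos (sin (x / 2)); nra.
Qed.

Section Rotations.
Variable n : nat.
Implicit Types (u v : Cn n) (w : 'I_n -> R).

Lemma Phi_vsub w u v : vsub (Phi w u) (Phi w v) = Phi w (vsub u v).
Proof. by apply: functional_extensionality => j; rewrite /Phi /crot /vsub /=; f_equal; ring. Qed.

Lemma vnorm_Phi w v : vnorm (Phi w v) = vnorm v.
Proof.
rewrite /vnorm; congr sqrt; apply: eq_bigr => j _ /=.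
have := sin2_cos2 (w j); rewrite /Rsqr => cs; nra.
Qed.

Lemma vnorm_Phi_vsub w u v : vnorm (vsub (Phi w u) (Phi w v)) = vnorm (vsub u v).
Proof. by rewrite Phi_vsub vnorm_Phi. Qed.

Lemma Phi_comp w w' v : Phi w (Phi w' v) = Phi (fun k => w k + w' k) v.
Proof.
apply: functional_extensionality => j.
by rewrite /Phi /crot /= cos_plus sin_plus; f_equal; ring.
Qed.

Lemma Phi_near_id w v e : 0 <= e -> (forall k, 2 - 2 * cos (w k) <= e * e) ->
  vnorm (vsub (Phi w v) v) <= e * vnorm v.
Proof.
move=> e0 we; apply: vnorm_le_sqr; first exact: Rmult_le_pos (vnorm_ge0 v).
rewrite (_ : e * vnorm v * (e * vnorm v) = e * e * (vnorm v * vnorm v)); last ring.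
rewrite vnorm_sqr /dot big_Rmult_distrl; apply: big_Rle => j /=.
have := sin2_cos2 (w j); rewrite /Rsqr => cs.
have := we j; have := Rle_0_sqr (fst (v j)); have := Rle_0_sqr (snd (v j)); rewrite /Rsqr; nra.
Qed.

Lemma Phi_near_id_small w v e : 0 <= e -> (forall k, Rabs (w k) <= e) ->
  vnorm (vsub (Phi w v) v) <= e * vnorm v.
Proof.
move=> e0 we; apply: Phi_near_id => // k; apply: Rle_trans (two_sub_cos_le _) _.
have := we k; have := Rsqr_abs (w k); have := Rabs_pos (w k); rewrite /Rsqr; nra.
Qed.

End Rotations.

Lemma bounded_representatives (I : eqType) (F : I -> R -> R) d (r : seq I) :
  0 < d -> (forall i s, Rabs (F i s) <= 1) ->
  forall A : R -> Prop, exists L, forall s, A s -> exists s', A s' /\ Rabs s' <= L /\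
    forall j, j \in r -> Rabs (F j s - F j s') <= d.
Proof.
move=> d0 F1; elim: r => [|i r IH] A.
  have [[s0 As0]|noA] := classic (exists s0, A s0); last by exists 0 => s As; case: noA; exists s.
  by exists (Rabs s0) => s _; exists s0; split=> //; split=> [|j]; [lra | rewrite in_nil].
(* induct on the slices of [A] on which [F i] varies by less than [d] *)
pose slice (k : nat) s := A s /\ INR k * d <= F i s + 1 < (INR k + 1) * d.
have slices m : exists L, forall k, (k < m)%N -> forall s, slice k s ->
    exists s', slice k s' /\ Rabs s' <= L /\ forall j, j \in r -> Rabs (F j s - F j s') <= d.
  elim: m => [|m [L1 HL1]]; first by exists 0.
  have [L2 HL2] := IH (slice m).
  exists (Rmax L1 L2) => k; rewrite ltnS leq_eqVlt => /orP [/eqP ->|km] s sk.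
    by have [s' [? [? ?]]] := HL2 s sk; exists s'; do !split => //; apply: Rle_trans (Rmax_r _ _).
  by have [s' [? [? ?]]] := HL1 k km s sk; exists s'; do !split => //; apply: Rle_trans (Rmax_l _ _).
have [N [_ N2d]] := nfloor_ex (2 / d) (Rlt_le _ _ (Rdiv_lt_0_compat 2 d ltac:(lra) d0)).
have [L HL] := slices N.+1; exists L => s As.
have /Rabs_le_between Fis := F1 i s.
have [k [kF Fk]] := nfloor_ex ((F i s + 1) / d) (Rdiv_le_0_compat (F i s + 1) d ltac:(lra) d0).
move: kF Fk; rewrite -Rle_div_r // Rlt_div_l // => kF Fk.
have kN : (k < N.+1)%N.
  apply/ltP/INR_lt; rewrite S_INR; move: N2d; rewrite Rlt_div_l //; nra.
have [s' [[As' [kF' Fk']] [s'L s'r]]] := HL k kN s (conj As (conj kF Fk)).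
exists s'; split=> //; split=> // j; rewrite in_cons => /orP [/eqP ->|]; last exact: s'r.
by apply: Rabs_le; lra.
Qed.

Lemma return_times_dense n (Lam : 'I_n -> R) d : 0 < d ->
  exists L, 0 <= L /\ forall s, exists tau, Rabs (tau - s) <= L /\
    forall j, 2 - 2 * cos (Lam j * tau) <= d * d.
Proof.
move=> d0.
pose F (p : 'I_n * bool) s := if p.2 then cos (Lam p.1 * s) else sin (Lam p.1 * s).
have F1 p s : Rabs (F p s) <= 1.
  by case: p => j [] /=; apply: Rabs_le; [apply: COS_bound | apply: SIN_bound].
have [L HL] := @bounded_representatives _ F (d / 2) (index_enum _) ltac:(lra) F1 (fun _ => True).
exists L; split; first by have [s' [_ [s'L _]]] := HL 0 I; have := Rabs_pos s'; lra.
move=> s; have [s' [_ [s'L close]]] := HL s I.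
(* [s - s'] returns since [Lam s] and [Lam s'] are close on the torus *)
exists (s - s'); split; first by rewrite (_ : s - s' - s = - s') ?Rabs_Ropp //; ring.
move=> j; have := close (j, true) (mem_index_enum _); have := close (j, false) (mem_index_enum _).
rewrite /F /= Rmult_minus_distr_l cos_minus => /Rabs_le_between ? /Rabs_le_between ?.
have := sin2_cos2 (Lam j * s); have := sin2_cos2 (Lam j * s'); rewrite /Rsqr; nra.
Qed.

(** * Means of almost periodic functions *)

Definition Rcontinuous (h : R -> R) := forall t, continuous h t.

Section RealIntegrals.
Implicit Types (f g h : R -> R).

Lemma ex_RInt_Rcont h a b : Rcontinuous h -> ex_RInt h a b.
Proof. by move=> hc; apply: (ex_RInt_continuous (V := R_CompleteNormedModule)) => t _. Qed.

Lemma Rint_RInt h a b : Rcontinuous h -> Rint h a b = RInt h a b.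
Proof.
move=> /(ex_RInt_Rcont a b) hI; have pr := ex_RInt_Reals_0 _ _ _ hI; rewrite /Rint.
have [pr' <-] := epsilon_spec (inhabits 0)
  (fun I => exists pr : Riemann_integrable h a b, RiemannInt pr = I)
  (ex_intro _ _ (ex_intro _ pr erefl)).
by rewrite (RInt_Reals _ _ _ pr').
Qed.

Lemma Rcont_sub f g : Rcontinuous f -> Rcontinuous g -> Rcontinuous (fun t => f t - g t).
Proof. by move=> fc gc t; apply: (continuous_minus f g). Qed.

Lemma Rcont_shift h c : Rcontinuous h -> Rcontinuous (fun t => h (t + c)).
Proof.
move=> hc t; apply: (continuous_comp (fun t => t + c) h) => //.
exact: (continuous_plus (fun t => t) (fun _ => c) _ (continuous_id _) (continuous_const _ _)).
Qed.

Lemma Rcont_scal f c : Rcontinuous f -> Rcontinuous (fun t => c * f t).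
Proof. by move=> fc t; apply: (continuous_scal_r c f). Qed.

Lemma Rcont_plus f g : Rcontinuous f -> Rcontinuous g -> Rcontinuous (fun t => f t + g t).
Proof. by move=> fc gc t; apply: (continuous_plus f g). Qed.

Lemma RInt_Chasles_cont h a b c : Rcontinuous h -> RInt h a b + RInt h b c = RInt h a c.
Proof. by move=> hc; apply: RInt_Chasles; apply: ex_RInt_Rcont. Qed.

Lemma RInt_minus_cont f g a b : Rcontinuous f -> Rcontinuous g ->
  RInt (fun t => f t - g t) a b = RInt f a b - RInt g a b.
Proof. by move=> fc gc; apply: (RInt_minus f g); apply: ex_RInt_Rcont. Qed.

Lemma RInt_shift_cont h s T : Rcontinuous h -> RInt h s (s + T) = RInt (fun t => h (t + s)) 0 T.
Proof.
move=> hc; have := RInt_comp_lin h 1 s 0 T (ex_RInt_Rcont _ _ hc).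
rewrite Rmult_0_r Rplus_0_l Rmult_1_l Rplus_comm => <-.
by apply: RInt_ext => t _; rewrite /scal /= /mult /= !Rmult_1_l.
Qed.

Lemma abs_RInt_le_cont h M a b : Rcontinuous h -> (forall t, Rabs (h t) <= M) ->
  Rabs (RInt h a b) <= M * Rabs (b - a).
Proof.
move=> hc hM; wlog ab : a b / a <= b => [wlog|].
  have [|ba] := Rle_dec a b; first exact: wlog.
  rewrite -opp_RInt_swap; last exact: ex_RInt_Rcont.
  by rewrite Rabs_Ropp -(Rabs_Ropp (b - a)) Ropp_minus_distr; apply: wlog; lra.
rewrite (Rabs_right (b - a)); last lra.
rewrite Rmult_comm.
by apply: abs_RInt_le_const => //; apply: ex_RInt_Rcont.
Qed.

Lemma is_RInt_big_sum (I : Type) (r : seq I) (f : I -> R -> R) a b :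
  (forall i, Rcontinuous (f i)) ->
  is_RInt (fun t => \big[Rplus/0]_(i <- r) f i t) a b (\big[Rplus/0]_(i <- r) RInt (f i) a b).
Proof.
move=> fc; elim: r => [|i r IH].
  rewrite big_nil; apply: (is_RInt_ext (fun _ => 0)) => [t _|]; first by rewrite big_nil.
  by have := is_RInt_const a b (0 : R_NormedModule); rewrite scal_zero_r.
rewrite big_cons; apply: (is_RInt_ext (fun t => f i t + \big[Rplus/0]_(j <- r) f j t)).
  by move=> t _; rewrite big_cons.
exact: (is_RInt_plus _ _ a b _ _ (RInt_correct _ a b (ex_RInt_Rcont a b (fc i))) IH).
Qed.

End RealIntegrals.

Definition almost_periods (h : R -> R) (L eta : R) :=
  forall s, exists tau, Rabs (tau - s) <= L /\ forall t, Rabs (h (t + tau) - h t) <= eta.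

Definition Ravg (h : R -> R) (T : R) := RInt h 0 T / T.

Lemma avgR_Ravg h T : 0 < T -> Rcontinuous h -> avgR h T = Ravg h T.
Proof.
move=> T0 hc; rewrite /avgR /Ravg; case: Rlt_dec => //= _.
by rewrite Rint_RInt // Rmult_comm.
Qed.

Definition mean_seq (h : R -> R) (N : nat) := Ravg h (INR N + 1).

(* an arbitrary real when [mean_seq h] diverges *)
Definition mean (h : R -> R) := epsilon (inhabits 0) (fun l => Un_cv (mean_seq h) l).

Lemma Rabs_div_le x y c : 0 < y -> Rabs x <= c -> Rabs (x / y) <= c / y.
Proof.
move=> y0 xc; rewrite Rabs_div ?(Rabs_right y); try lra.
by apply: Rmult_le_compat_r => //; apply/Rlt_le/Rinv_0_lt_compat.
Qed.

Section Mean.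
Variables (h : R -> R) (M : R).
Hypotheses (hc : Rcontinuous h) (hM : forall t, Rabs (h t) <= M).

Let M_ge0 : 0 <= M.
Proof. by have := hM 0; have := Rabs_pos (h 0); lra. Qed.

Lemma RInt_window_sub_le L eta s T : almost_periods h L eta -> 0 <= T ->
  Rabs (RInt h s (s + T) - RInt h 0 T) <= 2 * L * M + eta * T.
Proof.
move=> /(_ s) [tau [tau_s h_tau]] T0.
rewrite -(RInt_Chasles_cont s tau (s + T) hc) -(RInt_Chasles_cont tau (tau + T) (s + T) hc).
rewrite RInt_shift_cont //.
have shifted : Rabs (RInt (fun t => h (t + tau)) 0 T - RInt h 0 T) <= eta * T.
  rewrite -RInt_minus_cont; [|exact: Rcont_shift|done].
  rewrite (_ : eta * T = (T - 0) * eta); last ring.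
  apply: (abs_RInt_le_const _ _ _ _ T0); last by move=> t _; apply: h_tau.
  by apply/ex_RInt_Rcont/Rcont_sub => //; apply: Rcont_shift.
have head := abs_RInt_le_cont s tau hc hM.
have tail := abs_RInt_le_cont (tau + T) (s + T) hc hM.
rewrite (_ : s + T - (tau + T) = - (tau - s)) ?Rabs_Ropp in tail; last ring.
have := Rmult_le_compat_l M _ _ M_ge0 tau_s; move: shifted head tail.
move: (RInt _ 0 T) (RInt h 0 T) (RInt h s tau) (RInt h (tau + T) (s + T)) => a b c d.
have -> : c + (a + d) - b = c + (d + (a - b)) by ring.
have := Rabs_triang c (d + (a - b)); have := Rabs_triang d (a - b); lra.
Qed.

Lemma RInt_multiple_sub_le L eta T (N : nat) : almost_periods h L eta -> 0 <= T ->
  Rabs (RInt h 0 (INR N * T) - INR N * RInt h 0 T) <= INR N * (2 * L * M + eta * T).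
Proof.
move=> hap T0; elim: N => [|N IH].
  by rewrite /= !Rmult_0_l RInt_point Rminus_0_r Rabs_R0; lra.
have := RInt_window_sub_le (INR N * T) hap T0.
rewrite S_INR -(RInt_Chasles_cont 0 (INR N * T) ((INR N + 1) * T) hc).
rewrite (_ : (INR N + 1) * T = INR N * T + T); last ring.
move: IH; move: (RInt h 0 (INR N * T)) (RInt h (INR N * T) _) (RInt h 0 T) => a b c.
have -> : a + b - (INR N + 1) * c = (a - INR N * c) + (b - c) by ring.
have := Rabs_triang (a - INR N * c) (b - c); lra.
Qed.

Lemma Ravg_sub_le L eta T T' : almost_periods h L eta -> 0 < T <= T' ->
  Rabs (Ravg h T' - Ravg h T) <= 2 * M * T / T' + 2 * L * M / T + eta.
Proof.
move=> hap [T0 TT'].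
have T'T : 0 <= T' / T by apply: Rdiv_le_0_compat; lra.
have [N [NT' T'N]] := nfloor_ex (T' / T) T'T.
move: NT' T'N; rewrite -Rle_div_r // Rlt_div_l // => NT' T'N.
have N1 : 1 <= INR N.
  have : INR 0 < INR N by rewrite /=; nra.
  by move=> /INR_lt /le_INR.
rewrite Rmult_plus_distr_r Rmult_1_l in T'N.
set NT := INR N * T in NT' T'N.
have NT0 : 0 < NT by rewrite /NT; nra.
have rest : Rabs (RInt h NT T') <= M * T.
  apply: Rle_trans (abs_RInt_le_cont NT T' hc hM) _.
  by apply: Rmult_le_compat_l => //; rewrite Rabs_right; lra.
have whole : Rabs (RInt h 0 NT) <= M * NT.
  by apply: Rle_trans (abs_RInt_le_cont 0 NT hc hM) _; rewrite Rminus_0_r Rabs_right; lra.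
have periodic := RInt_multiple_sub_le N hap (Rlt_le _ _ T0).
rewrite /Ravg -(RInt_Chasles_cont 0 NT T' hc).
set a := RInt h 0 NT in whole periodic *; set d := RInt h NT T' in rest *.
set c := RInt h 0 T in periodic *.
have -> : (a + d) / T' - c / T = d / T' + a * (NT - T') / (T' * NT) + (a - INR N * c) / NT.
  by rewrite /NT; field; lra.
have b1 : Rabs (d / T') <= M * T / T' by apply: Rabs_div_le; lra.
have b2 : Rabs (a * (NT - T') / (T' * NT)) <= M * T / T'.
  rewrite (_ : M * T / T' = M * NT * T / (T' * NT)); last by field; lra.
  apply: Rabs_div_le; first nra.
  by rewrite Rabs_mult; apply: Rmult_le_compat; try apply: Rabs_pos; rewrite // Rabs_left1; lra.
have b3 : Rabs ((a - INR N * c) / NT) <= 2 * L * M / T + eta.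
  rewrite (_ : 2 * L * M / T + eta = INR N * (2 * L * M + eta * T) / NT); last first.
    by rewrite /NT; field; lra.
  exact: Rabs_div_le.
have := Rabs_triang (d / T' + a * (NT - T') / (T' * NT)) ((a - INR N * c) / NT).
have := Rabs_triang (d / T') (a * (NT - T') / (T' * NT)).
rewrite (_ : 2 * M * T / T' = M * T / T' + M * T / T'); last by field; lra.
lra.
Qed.

Lemma almost_periods_ge0 L eta : almost_periods h L eta -> 0 <= L /\ 0 <= eta.
Proof.
move=> /(_ 0) [tau [tauL /(_ 0)]]; have := Rabs_pos (tau - 0); have := Rabs_pos (h (0 + tau) - h 0).
lra.
Qed.

Lemma Ravg_stabilizes L eta : almost_periods h L eta -> 0 < eta ->
  exists T1, 0 < T1 /\ exists T2, forall T, T2 <= T -> Rabs (Ravg h T - Ravg h T1) <= 3 * eta.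
Proof.
move=> hap eta0; have [L0 _] := almost_periods_ge0 hap.
have LM_eta : 0 <= 2 * L * M / eta by apply: Rdiv_le_0_compat; nra.
have M_eta : 0 <= 2 * M / eta by apply: Rdiv_le_0_compat; lra.
set T1 := 2 * L * M / eta + 1; set T2 := T1 * (2 * M / eta + 1).
have T1_0 : 0 < T1 by rewrite /T1; lra.
have T1_eta : 2 * L * M / T1 <= eta.
  apply/Rle_div_l => //.
  have -> : eta * T1 = 2 * L * M + eta by rewrite /T1; field; lra.
  lra.
exists T1; split=> //; exists T2 => T T2T.
have T1T : T1 <= T by apply: Rle_trans T2T; rewrite /T2; nra.
have T_eta : 2 * M * T1 / T <= eta.
  apply/Rle_div_l; first lra.
  have : eta * T2 = T1 * (2 * M + eta) by rewrite /T2; field; lra.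
  have := Rmult_le_compat_l _ _ _ (Rlt_le _ _ eta0) T2T; nra.
have := Ravg_sub_le hap (conj T1_0 T1T); lra.
Qed.

Lemma mean_seq_cv : (forall eta, 0 < eta -> exists L, almost_periods h L eta) ->
  Un_cv (mean_seq h) (mean h).
Proof.
move=> hap; rewrite /mean; apply: epsilon_spec.
suff /Rcomplete.R_complete [l ?] : Cauchy_crit (mean_seq h) by exists l.
move=> eps eps0; have [L hapL] := hap (eps / 8) ltac:(lra).
have [T1 [_ [T2 stable]]] := Ravg_stabilizes hapL ltac:(lra).
have [N0 [_ N0T2]] := nfloor_ex (Rmax 0 T2) (Rmax_l _ _).
exists N0 => p q /le_INR pN0 /le_INR qN0; rewrite /R_dist /mean_seq.
have := stable (INR p + 1); have := stable (INR q + 1); have := Rmax_r 0 T2.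
move: (Ravg h (INR p + 1)) (Ravg h (INR q + 1)) => x y; split_Rabs; lra.
Qed.

Lemma Ravg_mean_le L eta l T : almost_periods h L eta -> Un_cv (mean_seq h) l -> 0 < T ->
  Rabs (Ravg h T - l) <= 2 * L * M / T + eta.
Proof.
move=> hap hl T0; apply: Rle_plus_epsilon => e e0.
have [N1 N1l] := hl (e / 2) ltac:(lra).
have Me : 0 <= 4 * M * T / e by apply: Rdiv_le_0_compat; nra.
have [N2 [_ N2T]] := nfloor_ex (4 * M * T / e + T) ltac:(lra).
set p := Nat.max N1 N2; set T' := INR p + 1.
have N2p : INR N2 <= INR p by apply/le_INR/Nat.le_max_r.
have TT' : T <= T' by rewrite /T'; lra.
have MT' : 2 * M * T / T' <= e / 2.
  apply/Rle_div_l; first lra.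
  have : 4 * M * T / e * e = 4 * M * T by field; lra.
  have : 4 * M * T / e <= T' by rewrite /T'; lra.
  nra.
have := Ravg_sub_le hap (conj T0 TT'); have := N1l p (Nat.le_max_l _ _); rewrite /R_dist /mean_seq -/T'.
move: (Ravg h T') (Ravg h T) => x y; split_Rabs; lra.
Qed.

Lemma avgR_mean_le L eta l T : almost_periods h L eta -> Un_cv (mean_seq h) l -> T <> 0 ->
  Rabs (avgR h T - l) <= 4 * L * M / Rabs T + 2 * eta.
Proof.
move=> hap hl T0; have [L0 eta0] := almost_periods_ge0 hap.
have LM_T T' : 0 < T' -> 0 <= 2 * L * M / T' by move=> ?; apply: Rdiv_le_0_compat; nra.
rewrite /avgR; case: Rlt_dec => [Tpos|Tneg] /=; rewrite Rint_RInt //.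
  have := Ravg_mean_le hap hl Tpos; have := LM_T _ Tpos.
  rewrite /Ravg (Rabs_right T); last lra.
  rewrite (_ : / T * RInt h 0 T = RInt h 0 T / T); last exact: Rmult_comm.
  rewrite (_ : 4 * L * M / T = 2 * (2 * L * M / T)); last by field.
  move=> ? ?; lra.
have Tneg' : 0 < - T by lra.
have := Ravg_mean_le hap hl Tneg'; have := LM_T _ Tneg'.
have := Rabs_div_le Tneg' (RInt_window_sub_le T hap (Rlt_le _ _ Tneg')).
rewrite Rplus_opp_r /Ravg (Rabs_left T); last lra.
rewrite (_ : 4 * L * M / - T = 2 * (2 * L * M / - T)); last by field; lra.
rewrite (_ : (2 * L * M + eta * - T) / - T = 2 * L * M / - T + eta); last by field; lra.
rewrite (_ : (RInt h T 0 - RInt h 0 (- T)) / - T = / - T * RInt h T 0 - RInt h 0 (- T) / - T);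
  last by field; lra.
move: (/ - T * RInt h T 0) (RInt h 0 (- T) / - T) => x y; split_Rabs; lra.
Qed.

End Mean.

(** * The averaged vector field *)

Section VectorAverages.
Variable n : nat.
Implicit Types F G : R -> Cn n.

Definition coord_continuous F :=
  forall j, Rcontinuous (fun t => fst (F t j)) /\ Rcontinuous (fun t => snd (F t j)).

Definition vavg F T : Cn n :=
  fun j => (avgR (fun t => fst (F t j)) T, avgR (fun t => snd (F t j)) T).

Definition vmean F : Cn n :=
  fun j => (mean (fun t => fst (F t j)), mean (fun t => snd (F t j))).

Lemma coord_continuous_vsub F G : coord_continuous F -> coord_continuous G ->
  coord_continuous (fun t => vsub (F t) (G t)).
Proof. by move=> Fc Gc j; have [? ?] := Fc j; have [? ?] := Gc j; split; apply: Rcont_sub. Qed.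

Lemma vavg_vsub F G T : 0 < T -> coord_continuous F -> coord_continuous G ->
  vsub (vavg F T) (vavg G T) = vavg (fun t => vsub (F t) (G t)) T.
Proof.
move=> T0 Fc Gc; apply: functional_extensionality => j.
have [? ?] := Fc j; have [? ?] := Gc j.
rewrite /vsub /vavg /= !avgR_Ravg //; try exact: Rcont_sub.
by rewrite /Ravg !RInt_minus_cont //; congr pair; field; lra.
Qed.

Lemma vnorm_vavg_le F T K : 0 < T -> coord_continuous F -> (forall t, vnorm (F t) <= K) ->
  vnorm (vavg F T) <= K.
Proof.
move=> T0 Fc FK; set w := vavg F T.
have K0 : 0 <= K by apply: Rle_trans (FK 0); apply: vnorm_ge0.
pose f j t := fst (w j) * fst (F t j) + snd (w j) * snd (F t j).
have fc j : Rcontinuous (f j) by have [? ?] := Fc j; apply: Rcont_plus; apply: Rcont_scal.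
have int_dot : is_RInt (fun t => dot w (F t)) 0 T (T * dot w w).
  have -> : T * dot w w = \big[Rplus/0]_(j <- index_enum 'I_n) RInt (f j) 0 T.
    rewrite /dot big_Rmult_distrl; apply: eq_bigr => j _; have [c1 c2] := Fc j.
    rewrite RInt_plus ?RInt_scal; try exact: ex_RInt_Rcont.
    - by rewrite /w /vavg /= !avgR_Ravg // /Ravg /scal /plus /= /mult /=; field; lra.
    - exact: ex_RInt_Rcont 0 T (Rcont_scal (c := fst (w j)) c1).
    - exact: ex_RInt_Rcont 0 T (Rcont_scal (c := snd (w j)) c2).
  exact: is_RInt_big_sum.
have : T * dot w w <= T * (vnorm w * K).
  have := is_RInt_le _ _ 0 T _ _ (Rlt_le _ _ T0) int_dot (is_RInt_const 0 T (vnorm w * K)).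
  rewrite /scal /= /mult /= Rminus_0_r; apply=> t _.
  exact: Rle_trans (Cauchy_Schwarz _ _) (Rmult_le_compat_l _ _ _ (vnorm_ge0 w) (FK t)).
rewrite -vnorm_sqr => /(Rmult_le_reg_l _ _ _ T0); have := vnorm_ge0 w; nra.
Qed.

End VectorAverages.

Section Orbit.
Variable n : nat.

Definition vcontinuous (F : R -> Cn n) := forall t0 eps, 0 < eps -> exists d, 0 < d /\
  forall t, Rabs (t - t0) < d -> vnorm (vsub (F t) (F t0)) < eps.

Lemma vcontinuous_coord F : vcontinuous F -> coord_continuous F.
Proof.
move=> Fc j; split=> t0; apply/continuity_pt_filterlim => eps eps0;
  have [d [d0 Fd]] := Fc t0 eps eps0; exists d; split=> // t [_ tt0];
  have [? ?] := vnorm_coord (vsub (F t) (F t0)) j; apply: Rle_lt_trans (Fd t tt0); done.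
Qed.

Lemma Phi_lin_vcontinuous (c : 'I_n -> R) v : vcontinuous (fun t => Phi (fun k => c k * t) v).
Proof.
move=> t0 eps eps0; set B := 1 + \big[Rplus/0]_k Rabs (c k).
have B1 : 1 <= B.
  suff : 0 <= \big[Rplus/0]_k Rabs (c k) by rewrite /B => ?; lra.
  by apply: big_Rle0 => k _; apply: Rabs_pos.
have v0 := vnorm_ge0 v.
exists (eps / (B * (vnorm v + 1))); split; first by apply: Rdiv_lt_0_compat; nra.
move=> t /Rlt_div_r tt0.
have -> : Phi (fun k => c k * t) v = Phi (fun k => c k * (t - t0)) (Phi (fun k => c k * t0) v).
  by rewrite Phi_comp; congr Phi; apply: functional_extensionality => k; ring.
apply: Rle_lt_trans (Phi_near_id_small _ (e := B * Rabs (t - t0)) _ _) _.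
- by apply: Rmult_le_pos; [lra | apply: Rabs_pos].
- move=> k; rewrite Rabs_mult; apply: Rmult_le_compat_r; first exact: Rabs_pos.
  have := @big_Rle_term _ (fun k => Rabs (c k)) k (fun k => Rabs_pos (c k)); rewrite /B => ?; lra.
- rewrite vnorm_Phi; have := tt0 ltac:(nra); have := Rabs_pos (t - t0); nra.
Qed.

Variables (Lam : 'I_n -> R) (P : Cn n -> Cn n).

Definition orbit (a : Cn n) (t : R) : Cn n :=
  Phi (fun k => Lam k * t) (P (Phi (fun k => - (Lam k * t)) a)).

Lemma avgP_orbit T a : avgP Lam P T a = vavg (orbit a) T.
Proof. by []. Qed.

Lemma vnorm_orbit a t : vnorm (orbit a t) = vnorm (P (Phi (fun k => - (Lam k * t)) a)).
Proof. exact: vnorm_Phi. Qed.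

Lemma orbit_continuous a :
  (forall x eps, 0 < eps -> exists delta, 0 < delta /\
     forall y, vnorm (vsub y x) < delta -> vnorm (vsub (P y) (P x)) < eps) ->
  vcontinuous (orbit a).
Proof.
move=> Pc t0 eps eps0.
have opp_lin t : (fun k => - (Lam k * t)) = (fun k => - Lam k * t).
  by apply: functional_extensionality => k; ring.
pose b t := Phi (fun k => - (Lam k * t)) a.
have [dP [dP0 PdP]] := Pc (b t0) (eps / 2) ltac:(lra).
have [d1 [d10 bd1]] := Phi_lin_vcontinuous (fun k => - Lam k) a t0 dP0.
have [d2 [d20 Pd2]] := Phi_lin_vcontinuous Lam (P (b t0)) t0 (ltac:(lra) : 0 < eps / 2).
exists (Rmin d1 d2); split=> [|t tt0]; first exact: Rmin_glb_lt.
have /bd1 close_b : Rabs (t - t0) < d1 by apply: Rlt_le_trans tt0 (Rmin_l _ _).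
have /Pd2 close_P : Rabs (t - t0) < d2 by apply: Rlt_le_trans tt0 (Rmin_r _ _).
rewrite /= -!opp_lin -/(b t) -/(b t0) in close_b close_P.
apply: Rle_lt_trans (vnorm_vsub_le _ (Phi (fun k => Lam k * t) (P (b t0))) _) _.
by rewrite /orbit -/(b t) -/(b t0) vnorm_Phi_vsub; have := PdP _ close_b; lra.
Qed.

Section BoundedOnBall.
Variables (r K : R).
Hypotheses (r0 : 0 <= r) (K0 : 0 <= K) (PK : forall u, vnorm u <= r -> vnorm (P u) <= K)
  (PLip : forall u v, vnorm u <= r -> vnorm v <= r -> vnorm (vsub (P u) (P v)) <= K * vnorm (vsub u v)).

Lemma orbit_shift_le e tau a t : 0 <= e -> (forall j, 2 - 2 * cos (Lam j * tau) <= e * e) ->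
  vnorm a <= r -> vnorm (vsub (orbit a (t + tau)) (orbit a t)) <= e * K * (1 + r).
Proof.
move=> e0 return_tau ar.
set b := Phi (fun k => - (Lam k * t)) a; set c := Phi (fun k => - (Lam k * tau)) b.
have br : vnorm b <= r by rewrite vnorm_Phi.
have cr : vnorm c <= r by rewrite vnorm_Phi.
have -> : orbit a (t + tau) = Phi (fun k => Lam k * t) (Phi (fun k => Lam k * tau) (P c)).
  rewrite /orbit /c /b !Phi_comp.
  by congr (Phi _ (P (Phi _ a))); apply: functional_extensionality => k; ring.
rewrite /orbit -/b vnorm_Phi_vsub; apply: Rle_trans (vnorm_vsub_le _ (P c) _) _.
have rot_Pc : vnorm (vsub (Phi (fun k => Lam k * tau) (P c)) (P c)) <= e * K.
  exact: Rle_trans (Phi_near_id _ e0 return_tau) (Rmult_le_compat_l _ _ _ e0 (PK cr)).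
have rot_b : vnorm (vsub c b) <= e * r.
  apply: Rle_trans (Phi_near_id _ e0 _) (Rmult_le_compat_l _ _ _ e0 br) => k.
  by rewrite cos_neg; apply: return_tau.
have := PLip cr br; have := Rmult_le_compat_l _ _ _ K0 rot_b; lra.
Qed.

Lemma orbit_coord_almost_periods eta : 0 < eta -> exists L, 0 <= L /\
  forall a, vnorm a <= r -> forall j, almost_periods (fun t => fst (orbit a t j)) L eta /\
    almost_periods (fun t => snd (orbit a t j)) L eta.
Proof.
move=> eta0; set e := eta / (K * (1 + r) + 1).
have e0 : 0 < e by apply: Rdiv_lt_0_compat; nra.
have eKr : e * K * (1 + r) <= eta.
  rewrite (_ : e * K * (1 + r) = eta * (K * (1 + r)) / (K * (1 + r) + 1)); last first.
    by rewrite /e; field; nra.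
  apply/Rle_div_l; nra.
have [L [L0 HL]] := return_times_dense Lam e0; exists L; split=> // a ar j.
suff shift s : exists tau, Rabs (tau - s) <= L /\ forall t,
    vnorm (vsub (orbit a (t + tau)) (orbit a t)) <= eta.
  split=> s; have [tau [tauL close]] := shift s; exists tau; split=> // t;
  have [c1 c2] := vnorm_coord (vsub (orbit a (t + tau)) (orbit a t)) j;
  by [apply: Rle_trans c1 (close t) | apply: Rle_trans c2 (close t)].
have [tau [tauL return_tau]] := HL s; exists tau; split=> // t.
exact: Rle_trans (orbit_shift_le t (Rlt_le _ _ e0) return_tau ar) eKr.
Qed.

End BoundedOnBall.

End Orbit.

Section BallBounds.
Variables (n : nat) (X : R -> R).

(* [LipX X f] is the continuity of [f] together with [ball_bounds X f] *)
Definition ball_bounds (f : Cn n -> Cn n) := forall r, 0 <= r ->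
  (forall v, vnorm v < r -> vnorm (f v) <= X r) /\
  (forall u v, vnorm u < r -> vnorm v < r -> vnorm (vsub (f u) (f v)) <= X r * vnorm (vsub u v)).

Lemma ball_bounds_continuous f : (forall r, 0 <= r -> 0 <= X r) -> ball_bounds f ->
  forall x eps, 0 < eps -> exists delta, 0 < delta /\
    forall y, vnorm (vsub y x) < delta -> vnorm (vsub (f y) (f x)) < eps.
Proof.
move=> X0 fX x eps eps0; set r := vnorm x + 1.
have r0 : 0 <= r by rewrite /r; have := vnorm_ge0 x; lra.
have Xr := X0 r r0; have [_ flip] := fX r r0.
exists (Rmin 1 (eps / (X r + 1))); split.
  by apply: Rmin_glb_lt; [lra | apply: Rdiv_lt_0_compat; lra].
move=> y yx; have yx1 := Rlt_le_trans _ _ _ yx (Rmin_l _ _).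
have /Rlt_div_r yxe := Rlt_le_trans _ _ _ yx (Rmin_r _ _).
have yr : vnorm y < r.
  rewrite -(vsubv0 y); apply: Rle_lt_trans (vnorm_vsub_le _ x _) _; rewrite vsubv0 /r; lra.
apply: Rle_lt_trans (flip y x yr ltac:(rewrite /r; lra)) _.
have := yxe ltac:(lra); have := vnorm_ge0 (vsub y x); nra.
Qed.

Lemma ball_bounds_limit (f : R -> Cn n -> Cn n) g :
  (forall T, 0 < T -> ball_bounds (f T)) ->
  (forall u v eps, 0 < eps -> exists T, 0 < T /\
     vnorm (vsub (f T u) (g u)) < eps /\ vnorm (vsub (f T v) (g v)) < eps) ->
  ball_bounds g.
Proof.
move=> fX fg r r0; split=> [v vr|u v ur vr]; apply: Rle_plus_epsilon => e e0.
  have [T [T0 [close _]]] := fg v v e e0; have [fTb _] := fX T T0 r r0.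
  rewrite -(vsubv0 (g v)); apply: Rle_trans (vnorm_vsub_le _ (f T v) _) _.
  by rewrite vnorm_vsubC vsubv0; have := fTb v vr; lra.
have [T [T0 [closeu closev]]] := fg u v (e / 2) ltac:(lra); have [_ fTl] := fX T T0 r r0.
apply: Rle_trans (vnorm_vsub_le _ (f T u) _) _.
apply: Rle_trans (Rplus_le_compat_l _ _ _ (vnorm_vsub_le _ (f T v) _)) _.
by rewrite (vnorm_vsubC (g u)); have := fTl u v ur vr; lra.
Qed.

End BallBounds.

Section Averaging.
Variables (n : nat) (Lam : 'I_n -> R) (X : R -> R) (P : Cn n -> Cn n).
Hypotheses (X_adm : Xadm X) (P_Lip : LipX X P).

Let orbit_coord_continuous a : coord_continuous (orbit Lam P a).
Proof. by apply/vcontinuous_coord/orbit_continuous; case: P_Lip. Qed.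

Lemma avgP_ball_bounds T : 0 < T -> ball_bounds X (avgP Lam P T).
Proof.
move=> T0 r r0; have [_ /(_ r r0) [Pb Pl]] := P_Lip.
split=> [v vr|u v ur vr]; rewrite !avgP_orbit.
  by apply: vnorm_vavg_le => // t; rewrite vnorm_orbit; apply: Pb; rewrite vnorm_Phi.
rewrite vavg_vsub //; apply: vnorm_vavg_le => //; first exact: coord_continuous_vsub.
move=> t; rewrite /orbit vnorm_Phi_vsub -(vnorm_Phi_vsub (fun k => - (Lam k * t)) u v).
by apply: Pl; rewrite vnorm_Phi.
Qed.

Lemma avgP_vmean_le r eta : 0 <= r -> 0 < eta -> exists L, 0 <= L /\ forall T, T <> 0 ->
  forall a, vnorm a <= r -> vnorm (vsub (avgP Lam P T a) (vmean (orbit Lam P a))) <=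
    (2 * INR n + 1) * (4 * L * X (r + 1) / Rabs T + 2 * eta).
Proof.
move=> r0 eta0; set K := X (r + 1).
have K0 : 0 <= K by case: X_adm => X0 _; apply: X0; lra.
have [_ /(_ (r + 1) ltac:(lra)) [Pb Pl]] := P_Lip.
have PK u : vnorm u <= r -> vnorm (P u) <= K by move=> ?; apply: Pb; lra.
have PLip u v : vnorm u <= r -> vnorm v <= r -> vnorm (vsub (P u) (P v)) <= K * vnorm (vsub u v).
  by move=> ? ?; apply: Pl; lra.
have AP := orbit_coord_almost_periods Lam r0 K0 PK PLip.
have orbit_K a t j : vnorm a <= r ->
    Rabs (fst (orbit Lam P a t j)) <= K /\ Rabs (snd (orbit Lam P a t j)) <= K.
  move=> ar; have [? ?] := vnorm_coord (orbit Lam P a t) j.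
  have := PK _ (Rle_trans _ _ _ (Req_le _ _ (vnorm_Phi (fun k => - (Lam k * t)) a)) ar).
  rewrite -vnorm_orbit; lra.
have [L [L0 APL]] := AP eta eta0; exists L; split=> // T T0 a ar.
have LKT : 0 <= 4 * L * K / Rabs T by apply: Rdiv_le_0_compat; [nra | apply: Rabs_pos_lt].
apply: vnorm_le_coords => [|j]; first lra.
have mean_le h : Rcontinuous h -> (forall t, Rabs (h t) <= K) ->
    (forall eta', 0 < eta' -> exists L', almost_periods h L' eta') -> almost_periods h L eta ->
    Rabs (avgR h T - mean h) <= 4 * L * K / Rabs T + 2 * eta.
  by move=> hc hK hap hapL; exact: (avgR_mean_le hc hK hapL (mean_seq_cv hc hK hap) T0).
have [c1 c2] := orbit_coord_continuous a j; have [ap1 ap2] := APL a ar j.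
have ap eta' : 0 < eta' -> exists L', almost_periods (fun t => fst (orbit Lam P a t j)) L' eta' /\
    almost_periods (fun t => snd (orbit Lam P a t j)) L' eta'.
  by move=> /AP [L' [_ APL']]; exists L'; apply: APL'.
split; apply: mean_le => //.
- by move=> t; case: (orbit_K a t j ar).
- by move=> eta' /ap [L' [? _]]; exists L'.
- by move=> t; case: (orbit_K a t j ar).
- by move=> eta' /ap [L' [_ ?]]; exists L'.
Qed.

Lemma avgP_uniform_cv r eps : 0 <= r -> 0 < eps -> exists T0, 0 < T0 /\
  forall T, T0 <= Rabs T -> forall a, vnorm a <= r ->
    vnorm (vsub (avgP Lam P T a) (vmean (orbit Lam P a))) < eps.
Proof.
move=> r0 eps0; set N := 2 * INR n + 1; set K := X (r + 1).
have N1 : 1 <= N by rewrite /N; have := pos_INR n; lra.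
have K0 : 0 <= K by case: X_adm => X0 _; apply: X0; lra.
have [L [L0 bound]] := avgP_vmean_le r0 (Rdiv_lt_0_compat eps (4 * N) eps0 ltac:(lra)).
have LKN : 0 <= 8 * L * K * N / eps.
  by apply: Rdiv_le_0_compat => //; have := Rmult_le_pos _ _ L0 K0; nra.
exists (8 * L * K * N / eps + 1); split=> [|T T0 a ar]; first lra.
have T0' : T <> 0 by move=> T0'; move: T0; rewrite T0' Rabs_R0; lra.
apply: Rle_lt_trans (bound T T0' a ar) _; rewrite -/K -/N.
have T_pos : 0 < Rabs T by lra.
have small : N * (4 * L * K / Rabs T) < eps / 2.
  rewrite (_ : N * (4 * L * K / Rabs T) = 4 * L * K * N / Rabs T); last by field; lra.
  apply/Rlt_div_l => //; have := Rmult_le_compat_l _ _ _ (Rlt_le _ _ eps0) T0.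
  rewrite Rmult_plus_distr_l (_ : eps * (8 * L * K * N / eps) = 8 * L * K * N); last by field; lra.
  lra.
rewrite Rmult_plus_distr_l (_ : N * (2 * (eps / (4 * N))) = eps / 2); last by field; lra.
lra.
Qed.

End Averaging.

Theorem lemma3p2 (n : nat) (Lam : 'I_n -> R) (X : R -> R) (P : Cn n -> Cn n) :
  (forall j, Lam j <> 0) -> Xadm X -> LipX X P ->
  exists Pav : Cn n -> Cn n,
    LipX X Pav /\
    (forall r, 0 < r -> forall eps, 0 < eps ->
       exists T0, 0 < T0 /\
         forall T, T0 <= Rabs T -> forall a : Cn n, vnorm a <= r ->
           vnorm (vsub (avgP Lam P T a) (Pav a)) < eps).
Proof.
(* the recurrence argument works for any frequencies *)
move=> _ X_adm P_Lip; have cv := avgP_uniform_cv Lam X_adm P_Lip.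
exists (fun a => vmean (orbit Lam P a)); split; last by move=> r r0 eps; exact/cv/Rlt_le.
have bounds : ball_bounds X (fun a => vmean (orbit Lam P a)).
  apply: (ball_bounds_limit (f := avgP Lam P)) => [T T0|u v eps eps0].
    exact: avgP_ball_bounds.
  have [T0 [T00 close]] := cv _ eps (Rle_trans _ _ _ (vnorm_ge0 u) (Rmax_l _ (vnorm v))) eps0.
  have T0T0 : T0 <= Rabs T0 by rewrite Rabs_right; lra.
  by exists T0; split=> //; split; apply: close T0T0 _ _; [apply: Rmax_l | apply: Rmax_r].
split=> //; apply: ball_bounds_continuous bounds; by case: X_adm.
Qed.
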